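(* Let $X$ be a proper, path connected metric space, let $S$ be a discrete subset of $X$, and let $x_0\in S$. Then $$\bigcup_{1\le i\le \#(S)} B_i(x_0)=X \qquad\text{and}\qquad b_i(x_0)\cap b_j(x_0)=\emptyset\ \text{ whenever } i\ne j.$$
   Context: $(X,d)$ is a metric space. It is proper if for every $x\in X$ the function $d(x,\cdot)$ is a proper map (in particular every closed ball is compact). A subset $S\subseteq X$ is discrete if every compact subset of $X$ contains only finitely many points of $S$. For $x\in X$ and $r>0$ write $N_r(x)=\{y\in X: d(x,y)<r\}$ and $C_r(x)=\{y\in X: d(x,y)=r\}$; $\#(\cdot)$ denotes cardinality. For $x_0\in S$, a positive integer $n\le\#(S)$, and $x\in X$ with $r=d(x,x_0)$, define: $x\in b_n(x_0)$ iff $\#(N_r(x)\cap S)=n-1$ and $C_r(x)\cap S=\{x_0\}$; and $x\in B_n(x_0)$ iff $\#(N_r(x)\cap S)=m$ and $\#(C_r(x)\cap S)=\ell$ for some integers $m\ge 0$, $\ell\ge 1$ with $m+1\le n\le m+\ell$. *)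

From HB Require Import structures.
From mathcomp Require Import all_boot all_order all_algebra.
From mathcomp Require Import all_classical all_reals all_analysis.
Set Implicit Arguments. Unset Strict Implicit. Unset Printing Implicit Defensive.
Import Order.TTheory GRing.Theory Num.Theory numFieldTopology.Exports.
Local Open Scope classical_set_scope.
Local Open Scope ring_scope.

Section Defs.
Context {R : realType} {X : metricType R}.

Definition Nball (x : X) (r : R) : set X := [set y | mdist x y < r].
Definition Csphere (x : X) (r : R) : set X := [set y | mdist x y = r].

Definition proper_metric : Prop :=
  forall (x : X) (K : set R), compact K -> compact (mdist x @^-1` K).

Definition path_connected : Prop :=
  forall x y : X, exists f : R -> X,
    {within `[0, 1], continuous f} /\ f 0 = x /\ f 1 = y.

Definition discrete_subset (S : set X) : Prop :=
  forall K : set X, compact K -> finite_set (K `&` S).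

Definition small_b (S : set X) (x0 : X) (n : nat) (x : X) : Prop :=
  let r := mdist x x0 in
  (Nball x r `&` S #= `I_(n.-1))%card /\ Csphere x r `&` S = [set x0].

Definition big_B (S : set X) (x0 : X) (n : nat) (x : X) : Prop :=
  let r := mdist x x0 in
  exists m l : nat, (1 <= l)%N /\
    (Nball x r `&` S #= `I_m)%card /\ (Csphere x r `&` S #= `I_l)%card /\
    (m.+1 <= n)%N /\ (n <= m + l)%N.

End Defs.

From HB Require Import structures.
From mathcomp Require Import all_boot all_order all_algebra.
From mathcomp Require Import all_classical all_reals all_analysis.
From mathcomp Require Import finmap.
Local Open Scope classical_set_scope.
Local Open Scope ring_scope.
Import Order.TTheory.

(* Fix x and r := d(x, x0). Properness and discreteness make the open ball
   N_r(x) and the sphere C_r(x) meet S in finitely many points, m and l say,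
   with l >= 1 because x0 lies on the sphere; these m + l points of S are
   distinct, so n := m + 1 satisfies n <= #(S) and x lies in B_n(x0).
   Disjointness of the b_i is immediate: x in b_i(x0) determines i - 1 as the
   number of points of S in N_r(x). *)

Lemma card_setU_disjoint (T : choiceType) (A B : set T) (m l : nat) :
  A `&` B = set0 -> (A #= `I_m)%card -> (B #= `I_l)%card ->
  (A `|` B #= `I_(m + l))%card.
Proof.
move=> AB0 Am Bl.
have [fA fB] : finite_set A /\ finite_set B.
  by split; apply/finite_setP; [exists m | exists l].
have fAB : finite_set (A `|` B) by rewrite finite_setU.
rewrite -(fset_setK fAB); apply/card_eq_fsetP.
rewrite fset_setU // cardfsU -fset_setI // AB0 fset_set0 cardfs0 subn0.
by rewrite (card_fset_set Am) (card_fset_set Bl).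
Qed.

Lemma card_II_gt0 (T : Type) (A : set T) (y : T) (n : nat) :
  A y -> (A #= `I_n)%card -> (0 < n)%N.
Proof.
move=> Ay An; rewrite -card_le_II -(card_le_eqr An).
rewrite -(card_le_eql (card_set1 (x := y))); by apply: subset_card_le => _ ->.
Qed.

Section ProperDiscrete.
Context {R : realType} {X : metricType R}.
Implicit Types (S : set X) (x : X) (r : R).

Lemma Nball_Csphere_disjoint x r : Nball x r `&` Csphere x r = set0.
Proof.
apply/seteqP; split => // y [].
by rewrite /Nball /Csphere /= => /[swap] ->; rewrite ltxx.
Qed.

Lemma finite_closed_ball_discrete S x r :
  @proper_metric R X -> discrete_subset S ->
  finite_set ([set y | mdist x y <= r] `&` S).
Proof.
move=> Xproper Sdiscr.
have ball_compact : compact (mdist x @^-1` `[0, r]) by apply/Xproper/segment_compact.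
apply: sub_finite_set (Sdiscr _ ball_compact).
by move=> y [/= yr Sy]; split; rewrite //= in_itv /= mdist_ge0.
Qed.

Lemma small_b_card S x0 n x :
  small_b S x0 n x -> (Nball x (mdist x x0) `&` S #= `I_n.-1)%card.
Proof. by case. Qed.

Lemma small_b_disjoint S x0 i j :
  (0 < i)%N -> (0 < j)%N -> i <> j -> small_b S x0 i `&` small_b S x0 j = set0.
Proof.
move=> i_gt0 j_gt0 ij; apply/seteqP; split => // x.
move=> [/small_b_card bi /small_b_card bj].
have /card_eq_II eij := card_eq_trans (card_esym bi) bj.
by apply: ij; rewrite -(prednK i_gt0) -(prednK j_gt0) eij.
Qed.

Lemma big_B_of_finite S x0 x :
  S x0 ->
  finite_set (Nball x (mdist x x0) `&` S) ->
  finite_set (Csphere x (mdist x x0) `&` S) ->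
  exists2 n, (0 < n)%N /\ (`I_n #<= S)%card & big_B S x0 n x.
Proof.
set A := Nball _ _ `&` S; set B := Csphere _ _ `&` S.
move=> Sx0 /finite_setP[m Am] /finite_setP[l Bl].
have l_gt0 : (0 < l)%N by apply: card_II_gt0 Bl.
have m_lt_ml : (m < m + l)%N by rewrite -addn1 leq_add2l.
have AB_card : (A `|` B #= `I_(m + l))%card.
  by apply: card_setU_disjoint Am Bl; rewrite setIACA Nball_Csphere_disjoint set0I.
exists m.+1; last by exists m, l.
split => //; apply: (@card_le_trans _ _ _ `I_(m + l)).
  by rewrite card_le_II.
by rewrite -(card_le_eql AB_card); apply: subset_card_le => y [[]|[]].
Qed.

Lemma big_B_cover S x0 x :
  @proper_metric R X -> discrete_subset S -> S x0 ->
  exists2 n, (0 < n)%N /\ (`I_n #<= S)%card & big_B S x0 n x.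
Proof.
move=> Xproper Sdiscr Sx0.
have ball_finite := finite_closed_ball_discrete S x (mdist x x0) Xproper Sdiscr.
apply: big_B_of_finite Sx0 _ _; apply: sub_finite_set ball_finite => y [dy Sy]; split => //.
- exact: ltW.
- by rewrite /= dy.
Qed.

End ProperDiscrete.

Theorem mainTheorem2 (R : realType) (X : metricType R) (S : set X) (x0 : X) :
  @proper_metric R X -> @path_connected R X -> discrete_subset S -> S x0 ->
  (\bigcup_(i in [set i : nat | (1 <= i)%N /\ (`I_i #<= S)%card])
      big_B S x0 i = [set: X]) /\
  (forall i j : nat,
      (1 <= i)%N -> (`I_i #<= S)%card -> (1 <= j)%N -> (`I_j #<= S)%card ->
      i <> j -> small_b S x0 i `&` small_b S x0 j = set0).
Proof.
move=> Xproper _ Sdiscr Sx0; split.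
- by apply/seteqP; split => // x _; apply: big_B_cover.
- by move=> i j i_gt0 _ j_gt0 _; apply: small_b_disjoint.
Qed.
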